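(* Let $K\ge L\ge 1$ and $T\ge 1$ be integers, let $\mathbb{F}_p$ be a finite field, $q$ a positive integer, $\omega\in\mathbb{F}_p$ a primitive $q$-th root of unity (so $q\mid p-1$), and consider the polynomial-code PDMM scheme with degree vectors of $\mathrm{GASP}_{\mathrm{small}}$ (resp. $\mathrm{GASP}_{\mathrm{big}}$), $N$ workers where $N$ is the number of distinct integers in its degree table, and evaluation points $\rho_n=\omega^{n-1}$, $n=1,\dots,N$. If $q$ is larger than the largest entry of the degree table and $q$ is coprime to $K$, then the $\mathrm{GASP}_{\mathrm{small}}$ scheme is decodable and $T$-private. For $\mathrm{GASP}_{\mathrm{big}}$, the condition that $q$ is larger than the largest entry of the degree table (together with $\omega$ being a primitive $q$-th root of unity) suffices for the scheme to be decodable and $T$-private.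
   Context: Generalized arithmetic progression: $\mathrm{GAP}(\ell,x,r)\in\mathbb{Z}^\ell$ is the vector consisting of the first $\ell$ terms of $(0,1,\dots,r-1,\;x,x+1,\dots,x+r-1,\;2x,2x+1,\dots,2x+r-1,\dots)$. For $1\le r\le\min(K,T)$, $\mathrm{GASP}_r(K,L,T)$ is given by integer degree vectors $\boldsymbol{\alpha}^{(p)}=(0,1,\dots,K-1)$, $\boldsymbol{\alpha}^{(s)}=KL+\mathrm{GAP}(T,K,r)$, $\boldsymbol{\beta}^{(p)}=K\cdot(0,1,\dots,L-1)$, $\boldsymbol{\beta}^{(s)}=KL+(0,1,\dots,T-1)$ (adding a scalar to a vector adds it to each entry). $\mathrm{GASP}_{\mathrm{small}}$ is the case $r=1$ and $\mathrm{GASP}_{\mathrm{big}}$ the case $r=\min(K,T)$. The degree table is the set of all sums $a+b$ with $a$ an entry of $\boldsymbol{\alpha}^{(p)}$ or $\boldsymbol{\alpha}^{(s)}$ and $b$ an entry of $\boldsymbol{\beta}^{(p)}$ or $\boldsymbol{\beta}^{(s)}$. The scheme: $\mathbf A\in\mathbb{F}_p^{r_A\times c_A}$, $\mathbf B\in\mathbb{F}_p^{c_A\times c_B}$ with arbitrary joint distribution, $K\mid r_A$, $L\mid c_B$; $\mathbf A=(\mathbf A_1^T\cdots\mathbf A_K^T)^T$, $\mathbf B=(\mathbf B_1\cdots\mathbf B_L)$ split into equal blocks. Random $\mathbf R_1,\dots,\mathbf R_T$ (size of $\mathbf A_i$) and $\mathbf S_1,\dots,\mathbf S_T$ (size of $\mathbf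 B_j$) are i.i.d. uniform and independent of $(\mathbf A,\mathbf B)$. $\mathbf F(x)=\sum_i\mathbf A_ix^{\alpha^{(p)}_i}+\sum_i\mathbf R_ix^{\alpha^{(s)}_i}$, $\mathbf G(x)=\sum_j\mathbf B_jx^{\beta^{(p)}_j}+\sum_j\mathbf S_jx^{\beta^{(s)}_j}$; worker $n$ receives $\mathbf F(\rho_n),\mathbf G(\rho_n)$ and returns $\mathbf F(\rho_n)\mathbf G(\rho_n)$. $T$-private: for every set of $T$ workers, the mutual information between $(\mathbf A,\mathbf B)$ and their received data is zero. Decodable: the main node can compute all $\mathbf A_i\mathbf B_j$ from the $N$ returned products. *)

From HB Require Import structures.
From mathcomp Require Import all_boot all_order all_algebra.
From mathcomp Require Import zify.
From mathcomp Require Import reals exp.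
Set Implicit Arguments.
Unset Strict Implicit.
Unset Printing Implicit Defensive.
Import Order.TTheory GRing.Theory Num.Theory.
Local Open Scope ring_scope.

(* k-th term (k >= 0) of (0,1,..,r-1, x,..,x+r-1, 2x,..,2x+r-1, ...) *)
Definition gap_term (x r k : nat) : nat := ((k %/ r) * x + k %% r)%N.
Definition GAP (l x r : nat) : seq nat := mkseq (gap_term x r) l.

(* GASP_r(K, L, T) degree vectors (entries, 0-indexed) *)
Definition alpha_p (i : nat) : nat := i.
Definition alpha_s (K L T r t : nat) : nat := (K * L + nth 0%N (GAP T K r) t)%N.
Definition beta_p (K j : nat) : nat := (K * j)%N.
Definition beta_s (K L t : nat) : nat := (K * L + t)%N.

Definition alpha_vec (K L T r : nat) : seq nat :=
  [seq alpha_p i | i <- iota 0 K] ++ [seq alpha_s K L T r t | t <- iota 0 T].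
Definition beta_vec (K L T : nat) : seq nat :=
  [seq beta_p K j | j <- iota 0 L] ++ [seq beta_s K L t | t <- iota 0 T].

Definition degree_table (K L T r : nat) : seq nat :=
  [seq (a + b)%N | a <- alpha_vec K L T r, b <- beta_vec K L T].

Definition nworkers (K L T r : nat) : nat := size (undup (degree_table K L T r)).

Definition max_degree (K L T r : nat) : nat := \max_(d <- degree_table K L T r) d.

Lemma blk_lt (K m : nat) (i : 'I_K) (k : 'I_m) : (i * m + k < K * m)%N.
Proof. have hi := ltn_ord i; have hk := ltn_ord k; nia. Qed.

Definition blockA (p K m n : nat) (A : 'M['F_p]_(K * m, n)) (i : 'I_K) : 'M['F_p]_(m, n) :=
  \matrix_(k < m, l < n) A (Ordinal (blk_lt i k)) l.
Definition blockB (p L s n : nat) (B : 'M['F_p]_(n, L * s)) (j : 'I_L) : 'M['F_p]_(n, s) :=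
  \matrix_(k < n, l < s) B k (Ordinal (blk_lt j l)).

Definition Fenc (p K L T r m n : nat) (A : 'M['F_p]_(K * m, n))
  (Rr : {ffun 'I_T -> 'M['F_p]_(m, n)}) (x : 'F_p) : 'M['F_p]_(m, n) :=
  \sum_(i < K) (x ^+ alpha_p i) *: blockA A i
  + \sum_(t < T) (x ^+ alpha_s K L T r t) *: Rr t.

Definition Genc (p K L T m n s : nat) (B : 'M['F_p]_(n, L * s))
  (Ss : {ffun 'I_T -> 'M['F_p]_(n, s)}) (x : 'F_p) : 'M['F_p]_(n, s) :=
  \sum_(j < L) (x ^+ beta_p K j) *: blockB B j
  + \sum_(t < T) (x ^+ beta_s K L t) *: Ss t.

(* evaluation point of worker w (0-indexed w = n-1): rho_n = omega^(n-1) *)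
Definition rho (p : nat) (omega : 'F_p) (N : nat) (w : 'I_N) : 'F_p := omega ^+ w.

(* secret x ~ P (arbitrary distribution on the finite type X), randomness z
   uniform on the finite type Z independent of x, observation y = f x z. *)
Section MI.
Variables (R : realType) (X Z Y : finType).

Definition joint (P : {ffun X -> R}) (f : X -> Z -> Y) (x : X) (y : Y) : R :=
  P x * (#|[set z : Z | f x z == y]|%:R / #|Z|%:R).
Definition marg_x (P : {ffun X -> R}) (f : X -> Z -> Y) (x : X) : R :=
  \sum_(y : Y) joint P f x y.
Definition marg_y (P : {ffun X -> R}) (f : X -> Z -> Y) (y : Y) : R :=
  \sum_(x : X) joint P f x y.

Definition mutual_info (P : {ffun X -> R}) (f : X -> Z -> Y) : R :=
  \sum_(x : X) \sum_(y : Y)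
    (if joint P f x y == 0 then 0
     else joint P f x y * ln (joint P f x y / (marg_x P f x * marg_y P f y))).

Definition is_distribution (P : {ffun X -> R}) : Prop :=
  (forall x, 0 <= P x) /\ \sum_(x : X) P x = 1.
End MI.

Definition secret_t (p K L m n s : nat) : finType :=
  ('M['F_p]_(K * m, n) * 'M['F_p]_(n, L * s))%type.
Definition random_t (p T m n s : nat) : finType :=
  ({ffun 'I_T -> 'M['F_p]_(m, n)} * {ffun 'I_T -> 'M['F_p]_(n, s)})%type.

Definition decodable (p K L T r : nat) (omega : 'F_p) (m n s : nat) : Prop :=
  let N := nworkers K L T r in
  exists dec : ('I_N -> 'M['F_p]_(m, s)) -> 'I_K -> 'I_L -> 'M['F_p]_(m, s),
    forall (A : 'M['F_p]_(K * m, n)) (B : 'M['F_p]_(n, L * s))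
           (Rr : {ffun 'I_T -> 'M['F_p]_(m, n)}) (Ss : {ffun 'I_T -> 'M['F_p]_(n, s)})
           (i : 'I_K) (j : 'I_L),
      dec (fun w => @Fenc p K L T r m n A Rr (rho omega w) *m @Genc p K L T m n s B Ss (rho omega w)) i j
      = blockA A i *m blockB B j.

Definition view (p K L T r : nat) (omega : 'F_p) (m n s : nat)
  (W : {set 'I_(nworkers K L T r)})
  (x : secret_t p K L m n s) (z : random_t p T m n s)
  : {ffun 'I_(nworkers K L T r) -> option ('M['F_p]_(m, n) * 'M['F_p]_(n, s))} :=
  [ffun w => if w \in W then
       Some (@Fenc p K L T r m n x.1 z.1 (rho omega w), @Genc p K L T m n s x.2 z.2 (rho omega w))
     else None].

Definition T_private (R : realType) (p K L T r : nat) (omega : 'F_p) (m n s : nat) : Prop :=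
  forall (P : {ffun secret_t p K L m n s -> R}), is_distribution P ->
  forall W : {set 'I_(nworkers K L T r)}, #|W| = T ->
    mutual_info P (@view p K L T r omega m n s W) = 0.

From HB Require Import structures.
From mathcomp Require Import all_boot all_order all_algebra.
From mathcomp Require Import reals exp.
From mathcomp Require Import zify.
Set Implicit Arguments.
Unset Strict Implicit.
Unset Printing Implicit Defensive.
Import Order.TTheory GRing.Theory Num.Theory.
Local Open Scope ring_scope.

(* The worker products are the values at omega^0, ..., omega^(N-1) of
   F G = \sum_d x^d C_d, where d runs over the N distinct entries of the degree
   table.  These are all below q, so the powers omega^d are distinct and the
   Vandermonde system determines every C_d; the degree i + K j < K L occurs
   only for A_i B_j, hence C_(i + K j) = A_i B_j.
   At T colluding points x_w the random part of F is
   \sum_t x_w^(K L) (x_w^e)^t R_t, with e = K for GASP_small and e = 1 for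
   GASP_big.  The x_w^e = (omega^e)^w are distinct (omega^K is again a
   primitive q-th root when q and K are coprime), so this is an invertible
   scaled Vandermonde map of (R_t) and a shift of R masks the A-part exactly;
   S masks B in the same way.  The view of any secret is thus a bijective
   relabelling of the view of the zero secret, and the mutual information
   vanishes. *)

Section PowerSums.
Variable F : fieldType.

Lemma roots_geq_power_sum_eq0 (I : finType) (W : {set I}) (u : I -> F) T m n
    (M : 'I_T -> 'M[F]_(m, n)) :
  {in W &, injective u} -> (T <= #|W|)%N ->
  (forall w, w \in W -> \sum_(t < T) u w ^+ t *: M t = 0) ->
  forall t, M t = 0.
Proof.
move=> u_inj leTW M0 t; apply/matrixP => a b; rewrite mxE.
pose c k := if insub k is Some t' then M t' a b else 0.
have p0 : \poly_(k < T) c k = 0.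
  apply: (@roots_geq_poly_eq0 _ _ [seq u w | w <- enum W]).
  - apply/allP => x /mapP [w]; rewrite mem_enum => wW ->.
    rewrite /root horner_poly; apply/eqP.
    have /matrixP/(_ a b) := M0 w wW; rewrite summxE mxE => sum0.
    by rewrite -[RHS]sum0; apply: eq_bigr => k _; rewrite /c valK mxE mulrC.
  - by rewrite map_inj_in_uniq ?enum_uniq // => x y; rewrite !mem_enum; apply: u_inj.
  - by rewrite size_map -cardE (leq_trans (size_poly _ _)).
by have := congr1 (fun p : {poly F} => p`_t) p0; rewrite coef_poly ltn_ord /c valK coef0.
Qed.

Lemma vandermonde_unitmx N (y : 'I_N -> F) :
  injective y -> Vandermonde N (\row_k y k) \in unitmx.
Proof.
move=> y_inj; rewrite unitmxE unitfE det_Vandermonde.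
apply/prodf_neq0 => i _; apply/prodf_neq0 => j ij; rewrite !mxE subr_eq0.
by apply: contraTneq ij => /y_inj ->; rewrite ltnn.
Qed.

Lemma moments_eq0 N (y : 'I_N -> F) m n (M : 'I_N -> 'M[F]_(m, n)) :
  injective y -> (forall i : 'I_N, \sum_k y k ^+ i *: M k = 0) ->
  forall k, M k = 0.
Proof.
move=> y_inj M0 k; apply/matrixP => a b; rewrite mxE.
pose D := \col_k M k a b.
have VD0 : Vandermonde N (\row_k y k) *m D = 0.
  apply/matrixP => i z; rewrite !mxE.
  have /matrixP/(_ a b) := M0 i; rewrite summxE mxE => sum0.
  by rewrite -[RHS]sum0; apply: eq_bigr => j _; rewrite !mxE.
have /matrixP/(_ k ord0) := mulKmx (vandermonde_unitmx y_inj) D.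
by rewrite VD0 mulmx0 !mxE.
Qed.

Lemma moments_fibres_eq0 N (y : 'I_N -> F) (E : finType) (d : E -> 'I_N)
    m n (M : E -> 'M[F]_(m, n)) :
  injective y -> (forall i : 'I_N, \sum_e y (d e) ^+ i *: M e = 0) ->
  forall k, \sum_(e | d e == k) M e = 0.
Proof.
move=> y_inj M0; apply: (moments_eq0 y_inj) => i.
rewrite -[RHS](M0 i) (partition_big d xpredT) //=; apply: eq_bigr => k _.
by rewrite scaler_sumr; apply: eq_bigr => e /eqP ->.
Qed.

End PowerSums.

Lemma power_sum_onto (F : finFieldType) (I : finType) (W : {set I}) (c u : I -> F)
    T m n (Y : I -> 'M[F]_(m, n)) :
  #|W| = T -> {in W &, injective u} -> (forall w, w \in W -> c w != 0) ->
  exists D : 'I_T -> 'M[F]_(m, n),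
    forall w, w \in W -> \sum_(t < T) (c w * u w ^+ t) *: D t = Y w.
Proof.
move=> card_W u_inj c_neq0.
pose f (D : {ffun 'I_T -> 'M[F]_(m, n)}) : {ffun {w | w \in W} -> 'M[F]_(m, n)} :=
  [ffun w => \sum_(t < T) (c (val w) * u (val w) ^+ t) *: D t].
have f_inj : injective f.
  move=> D1 D2 /ffunP fD; apply/ffunP => t; apply/eqP; rewrite -subr_eq0; apply/eqP.
  move: t; apply: (roots_geq_power_sum_eq0 u_inj); first by rewrite card_W.
  move=> w wW; have /eqP := fD (exist _ w wW); rewrite !ffunE /= -subr_eq0 -sumrB.
  rewrite (eq_bigr (fun t : 'I_T => c w *: (u w ^+ t *: (D1 t - D2 t)))) => [|t _].
    by rewrite -scaler_sumr scaler_eq0 (negbTE (c_neq0 w wW)) => /eqP.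
  by rewrite scalerA scalerBr.
have card_le : (#|{ffun {w | w \in W} -> 'M[F]_(m, n)}| <= #|{ffun 'I_T -> 'M[F]_(m, n)}|)%N.
  by rewrite !card_ffun card_sig /= card_ord -card_W (eq_card (B := W)).
have /codomP [D fD] := inj_card_onto f_inj card_le [ffun w => Y (val w)].
exists D => w wW; have /ffunP/(_ (exist _ w wW)) := fD.
by rewrite !ffunE => ->.
Qed.

Lemma sum_card_fibres (Z Y : finType) (g : Z -> Y) :
  (\sum_(y : Y) #|[set z | g z == y]| = #|Z|)%N.
Proof.
rewrite -sum1_card (partition_big g xpredT) //=.
by apply: eq_bigr => y _; rewrite -sum1_card; apply: eq_bigl => z; rewrite inE.
Qed.

Lemma mutual_info_eq0 (R : realType) (X Z Y : finType) (P : {ffun X -> R})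
    (f : X -> Z -> Y) (x0 : X) :
  is_distribution P ->
  (forall x, exists2 h : Z -> Z, injective h & forall z, f x0 (h z) = f x z) ->
  mutual_info P f = 0.
Proof.
move=> [_ P1] simulate.
have card_fibre x y : #|[set z | f x z == y]| = #|[set z | f x0 z == y]|.
  have [h h_inj fh] := simulate x; rewrite -[RHS](card_preimset _ h_inj).
  by apply: eq_card => z; rewrite !inE fh.
apply: big1 => x _; apply: big1 => y _; case: eqP => // joint_neq0.
set N : R := #|Z|%:R; set c : R := #|[set z | f x0 z == y]|%:R.
have jointE x' : joint P f x' y = P x' * (c / N) by rewrite /joint card_fibre.
have marg_xE : marg_x P f x = P x * (N / N).
  rewrite /marg_x /joint -mulr_sumr -mulr_suml -natr_sum.
  by under eq_bigr do rewrite card_fibre; rewrite sum_card_fibres.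
have marg_yE : marg_y P f y = c / N.
  by rewrite /marg_y; under eq_bigr do rewrite jointE; rewrite -mulr_suml P1 mul1r.
move: joint_neq0; rewrite marg_xE marg_yE jointE => /eqP; rewrite !mulf_eq0 negb_or.
case/andP => Px_neq0; rewrite negb_or invr_eq0 => /andP[c_neq0 N_neq0].
by rewrite divff // mulr1 divff ?ln1 ?mulr0 // !mulf_neq0 ?invr_eq0.
Qed.

Definition sum_case (A B C : Type) (f : A -> C) (g : B -> C) (e : A + B) : C :=
  match e with inl a => f a | inr b => g b end.

Section Encoding.
Variable F : comPzRingType.

Definition encode k T (a : 'I_k -> nat) (b : 'I_T -> nat) m n
    (P : 'I_k -> 'M[F]_(m, n)) (Q : 'I_T -> 'M[F]_(m, n)) (x : F) : 'M[F]_(m, n) :=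
  \sum_(i < k) x ^+ a i *: P i + \sum_(t < T) x ^+ b t *: Q t.

Lemma encode_sum k T a b m n P Q (x : F) :
  @encode k T a b m n P Q x =
  \sum_(e : 'I_k + 'I_T) x ^+ sum_case a b e *: sum_case P Q e.
Proof. by rewrite big_sumType. Qed.

Lemma mulmx_encode k T a b k' T' a' b' m n s P Q P' Q' (x : F) :
  @encode k T a b m n P Q x *m @encode k' T' a' b' n s P' Q' x =
  \sum_(e : ('I_k + 'I_T) * ('I_k' + 'I_T'))
     x ^+ (sum_case a b e.1 + sum_case a' b' e.2) *:
       (sum_case P Q e.1 *m sum_case P' Q' e.2).
Proof.
rewrite !encode_sum mulmx_suml.
rewrite -(pair_bigA _ (fun e e' => x ^+ (sum_case a b e + sum_case a' b' e') *:
                                  (sum_case P Q e *m sum_case P' Q' e'))) /=.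
apply: eq_bigr => e _.
rewrite mulmx_sumr; apply: eq_bigr => e' _.
by rewrite -scalemxAl -scalemxAr scalerA exprD.
Qed.

Lemma encode_mask k T a b m n P Q P0 Q' D (x : F) :
  (forall i, P0 i = 0) -> (forall t, Q' t = Q t + D t) ->
  \sum_(t < T) x ^+ b t *: D t = \sum_(i < k) x ^+ a i *: P i ->
  @encode k T a b m n P0 Q' x = encode a b P Q x.
Proof.
move=> P0E Q'E DE; rewrite /encode big1 ?add0r => [|i _]; last by rewrite P0E scaler0.
under eq_bigr do rewrite Q'E scalerDr.
by rewrite big_split /= DE addrC.
Qed.

End Encoding.

Lemma blockA0 p K m n (i : 'I_K) : @blockA p K m n 0 i = 0.
Proof. by apply/matrixP => a b; rewrite !mxE. Qed.

Lemma blockB0 p L s n (j : 'I_L) : @blockB p L s n 0 j = 0.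
Proof. by apply/matrixP => a b; rewrite !mxE. Qed.

Lemma FencE p K L T r m n A Rr (x : 'F_p) :
  @Fenc p K L T r m n A Rr x =
  encode (fun i : 'I_K => alpha_p i) (fun t : 'I_T => alpha_s K L T r t) (blockA A) Rr x.
Proof. by []. Qed.

Lemma GencE p K L T m n s B Ss (x : 'F_p) :
  @Genc p K L T m n s B Ss x =
  encode (fun j : 'I_L => beta_p K j) (fun t : 'I_T => beta_s K L t) (blockB B) Ss x.
Proof. by []. Qed.

(* A term of F G is a pair of a term of F and a term of G; [inl] indexes the
   data blocks and [inr] the random blocks. *)
Local Notation gasp_terms K L T := (('I_K + 'I_T) * ('I_L + 'I_T))%type.

Definition gasp_deg K L T r (e : gasp_terms K L T) : nat :=
  (sum_case (fun i : 'I_K => alpha_p i) (fun t : 'I_T => alpha_s K L T r t) e.1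
   + sum_case (fun j : 'I_L => beta_p K j) (fun t : 'I_T => beta_s K L t) e.2)%N.

Definition gasp_coef p K L T m n s (A : 'M['F_p]_(K * m, n)) (B : 'M['F_p]_(n, L * s))
    (Rr : {ffun 'I_T -> 'M['F_p]_(m, n)}) (Ss : {ffun 'I_T -> 'M['F_p]_(n, s)})
    (e : gasp_terms K L T) : 'M['F_p]_(m, s) :=
  sum_case (blockA A) Rr e.1 *m sum_case (blockB B) Ss e.2.

Lemma mulmx_FencGenc p K L T r m n s A B Rr Ss (x : 'F_p) :
  @Fenc p K L T r m n A Rr x *m @Genc p K L T m n s B Ss x =
  \sum_e x ^+ gasp_deg r e *: gasp_coef A B Rr Ss e.
Proof. by rewrite FencE GencE mulmx_encode. Qed.

Lemma gasp_deg_in_table K L T r (e : gasp_terms K L T) :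
  gasp_deg r e \in degree_table K L T r.
Proof.
have in_iota k (i : 'I_k) : (i : nat) \in iota 0 k by rewrite mem_iota ltn_ord.
apply: allpairs_f; case: e => [[i|t] [j|t']];
  by rewrite mem_cat ?(map_f _ (in_iota _ _)) ?orbT.
Qed.

Lemma gasp_deg_AB K L T r (i : 'I_K) (j : 'I_L) (e : gasp_terms K L T) :
  (gasp_deg r e == i + K * j)%N = (e == (inl i, inl j)).
Proof.
have digits (k l : nat) : (k < K -> (k + K * l) %/ K = l /\ (k + K * l) %% K = k)%N.
  move=> kK; have K_gt0 : (0 < K)%N by apply: leq_ltn_trans kK.
  by rewrite mulnC divnDMl // divn_small // add0n (addnC k) modnMDl modn_small.
have iK := ltn_ord i; have jL := ltn_ord j.
have KjL : (K * j.+1 <= K * L)%N by rewrite leq_mul2l jL orbT.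
case: e => [[i'|t] [j'|t']]; rewrite /gasp_deg /= /alpha_p /alpha_s /beta_p /beta_s.
- apply/eqP/eqP => [deg_eq | [-> ->]] //.
  have [j'_eq i'_eq] := digits i' j' (ltn_ord i'); have [j_eq i_eq] := digits i j iK.
  rewrite deg_eq in j'_eq i'_eq.
  by congr (inl _, inl _); apply: val_inj; rewrite /= -?i'_eq -?j'_eq.
all: case: eqP => deg_eq; [lia | by apply/esym/eqP => e_eq; congruence].
Qed.

Lemma alpha_s_small K L T (t : 'I_T) : alpha_s K L T 1 t = (K * L + t * K)%N.
Proof. by rewrite /alpha_s nth_mkseq // /gap_term divn1 modn1 addn0. Qed.

Lemma alpha_s_big K L T (t : 'I_T) : alpha_s K L T (minn K T) t = (K * L + t * 1)%N.
Proof.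
rewrite /alpha_s nth_mkseq // /gap_term muln1; congr (_ + _)%N.
case: (leqP K T) => [_ | TK]; first by rewrite -divn_eq.
by rewrite divn_small // mul0n add0n modn_small.
Qed.

Lemma leq_max_degree K L T r d :
  d \in degree_table K L T r -> (d <= max_degree K L T r)%N.
Proof. by move=> d_in; apply: (@leq_bigmax_seq _ _ xpredT id). Qed.

Lemma nworkers_leq K L T r q : (max_degree K L T r < q)%N -> (nworkers K L T r <= q)%N.
Proof.
move=> max_lt; rewrite -(size_iota 0 q); apply: uniq_leq_size; first exact: undup_uniq.
move=> d; rewrite mem_undup mem_iota add0n => /leq_max_degree d_le.
exact: leq_ltn_trans max_lt.
Qed.

Lemma prim_root_neq0 (F : fieldType) (z : F) q : q.-primitive_root z -> z != 0.
Proof.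
move=> z_prim; apply: contra_eq_neq (prim_expr_order z_prim) => ->.
by rewrite expr0n gtn_eqF ?(prim_order_gt0 z_prim) // eq_sym oner_eq0.
Qed.

Lemma rho_inj p (z : 'F_p) q N :
  q.-primitive_root z -> (N <= q)%N -> injective (@rho p z N).
Proof.
move=> z_prim N_le w w' /eqP; rewrite /rho (eq_prim_root_expr z_prim).
by rewrite !modn_small ?(leq_trans (ltn_ord _) N_le) // => /eqP/val_inj.
Qed.

Lemma decodable_of_determined p K L T r (om : 'F_p) m n s :
  (forall (A A' : 'M['F_p]_(K * m, n)) (B B' : 'M['F_p]_(n, L * s))
          (Rr Rr' : {ffun 'I_T -> 'M['F_p]_(m, n)}) (Ss Ss' : {ffun 'I_T -> 'M['F_p]_(n, s)}),
     (forall w : 'I_(nworkers K L T r),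
        Fenc L r A Rr (rho om w) *m Genc K m B Ss (rho om w) =
        Fenc L r A' Rr' (rho om w) *m Genc K m B' Ss' (rho om w)) ->
     forall i j, blockA A i *m blockB B j = blockA A' i *m blockB B' j) ->
  @decodable p K L T r om m n s.
Proof.
move=> determined.
pose products (x : (secret_t p K L m n s * random_t p T m n s)%type) :=
  [ffun w : 'I_(nworkers K L T r) =>
     Fenc L r x.1.1 x.2.1 (rho om w) *m Genc K m x.1.2 x.2.2 (rho om w)].
exists (fun v i j => if [pick x | products x == [ffun w => v w]] is Some x
                     then blockA x.1.1 i *m blockB x.1.2 j else 0).
move=> A B Rr Ss i j; case: pickP => [[[A' B'] [Rr' Ss']] /eqP/ffunP productsE | none].
  by apply: (determined _ _ _ _ Rr' Rr Ss' Ss) => w; have := productsE w; rewrite !ffunE.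
by have := none ((A, B), (Rr, Ss)); rewrite eqxx.
Qed.

Lemma gasp_decodable p K L T r (om : 'F_p) q m n s :
  q.-primitive_root om -> (max_degree K L T r < q)%N -> @decodable p K L T r om m n s.
Proof.
move=> om_prim max_lt; apply: decodable_of_determined => A A' B B' Rr Rr' Ss Ss' productsE i j.
set N := nworkers K L T r; set ds := undup (degree_table K L T r).
have deg_in_ds (e : gasp_terms K L T) : gasp_deg r e \in ds by rewrite mem_undup gasp_deg_in_table.
have idx_lt (e : gasp_terms K L T) : (index (gasp_deg r e) ds < N)%N.
  by rewrite index_mem deg_in_ds.
pose idx e := Ordinal (idx_lt e).
have idx_eq e e' : (idx e == idx e') = (gasp_deg r e == gasp_deg r e').
  apply/eqP/eqP => [/(congr1 (nth 0%N ds \o val)) | deg_eq]; last first.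
    by apply: val_inj; rewrite /= deg_eq.
  by rewrite /= !nth_index ?deg_in_ds.
pose y (k : 'I_N) := om ^+ nth 0%N ds k.
have y_inj : injective y.
  move=> k k' /eqP; rewrite (eq_prim_root_expr om_prim) !modn_small; first last.
  - by apply: leq_ltn_trans max_lt; apply: leq_max_degree; rewrite -mem_undup mem_nth.
  - by apply: leq_ltn_trans max_lt; apply: leq_max_degree; rewrite -mem_undup mem_nth.
  by rewrite nth_uniq ?undup_uniq // => /eqP/val_inj.
have yE e : y (idx e) = om ^+ gasp_deg r e by rewrite /y nth_index ?deg_in_ds.
pose D e := gasp_coef A B Rr Ss e - gasp_coef A' B' Rr' Ss' e.
have D_combination_eq0 (w : 'I_N) : \sum_e y (idx e) ^+ w *: D e = 0.
  rewrite (eq_bigr (fun e => rho om w ^+ gasp_deg r e *: gasp_coef A B Rr Ss e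
                           - rho om w ^+ gasp_deg r e *: gasp_coef A' B' Rr' Ss' e)).
    by rewrite sumrB -!mulmx_FencGenc productsE subrr.
  by move=> e _; rewrite yE exprAC scalerBr.
have := moments_fibres_eq0 y_inj D_combination_eq0 (idx (inl i, inl j)).
rewrite (big_pred1 (inl i, inl j)) => [/eqP|e]; last by rewrite idx_eq gasp_deg_AB.
by rewrite subr_eq0 => /eqP.
Qed.

Lemma gasp_private (R : realType) p K L T r (om : 'F_p) m n s e :
  (forall t : 'I_T, alpha_s K L T r t = K * L + t * e)%N -> om != 0 ->
  injective (@rho p (om ^+ e) (nworkers K L T r)) ->
  injective (@rho p om (nworkers K L T r)) ->
  @T_private R p K L T r om m n s.
Proof.
move=> alpha_sE om_neq0 rhoe_inj rho_om_inj P P_distr W card_W.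
apply: (mutual_info_eq0 (x0 := (0, 0))) => // -[A B].
have rho_neq0 (w : 'I_(nworkers K L T r)) : rho om w ^+ (K * L) != 0 by rewrite !expf_neq0.
have [D1 D1E] := power_sum_onto (F := 'F_p) (c := fun w => rho om w ^+ (K * L))
  (u := @rho p (om ^+ e) _) (fun w => \sum_(i < K) rho om w ^+ alpha_p i *: blockA A i)
  card_W (in2W rhoe_inj) (fun w _ => rho_neq0 w).
have [D2 D2E] := power_sum_onto (F := 'F_p) (c := fun w => rho om w ^+ (K * L))
  (u := @rho p om _) (fun w => \sum_(j < L) rho om w ^+ beta_p K j *: blockB B j)
  card_W (in2W rho_om_inj) (fun w _ => rho_neq0 w).
exists (fun z : random_t p T m n s => ([ffun t => z.1 t + D1 t], [ffun t => z.2 t + D2 t])).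
  move=> [R1 S1] [R2 S2] [/ffunP R12 /ffunP S12]; congr pair; apply/ffunP => t.
    by apply: (addIr (D1 t)); have := R12 t; rewrite !ffunE.
  by apply: (addIr (D2 t)); have := S12 t; rewrite !ffunE.
move=> [Rr Ss]; apply/ffunP => w; rewrite !ffunE; case: ifP => // wW.
rewrite FencE GencE [Fenc _ _ _ _ _]FencE [Genc _ _ _ _ _]GencE.
congr (Some (_, _)).
- apply: (encode_mask (D := D1)) => [i | t |] /=; rewrite ?blockA0 ?ffunE //.
  rewrite -D1E //; apply: eq_bigr => t _.
  by rewrite alpha_sE exprD /rho (exprAC om e w) (mulnC t e) (exprM _ e t).
- apply: (encode_mask (D := D2)) => [j | t |] /=; rewrite ?blockB0 ?ffunE //.
  by rewrite -D2E //; apply: eq_bigr => t _; rewrite exprD.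
Qed.

Theorem corollary1 (R : realType) (p : nat) (K L T q : nat) (omega : 'F_p)
    (m n s : nat) :
  prime p -> (1 <= L)%N -> (L <= K)%N -> (1 <= T)%N -> (0 < q)%N ->
  q.-primitive_root omega ->
  (* GASP_small (r = 1) *)
  ((max_degree K L T 1 < q)%N -> coprime q K ->
     @decodable p K L T 1 omega m n s /\ @T_private R p K L T 1 omega m n s)
  /\
  (* GASP_big (r = min(K, T)) *)
  ((max_degree K L T (minn K T) < q)%N ->
     @decodable p K L T (minn K T) omega m n s /\
     @T_private R p K L T (minn K T) omega m n s).
Proof.
move=> _ _ _ _ _ om_prim; have om_neq0 := prim_root_neq0 om_prim.
split=> [max_lt coprime_qK | max_lt]; have N_le := nworkers_leq max_lt;
  have rho_om_inj := rho_inj om_prim N_le; split; try exact: gasp_decodable om_prim max_lt.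
- have omK_prim : q.-primitive_root (omega ^+ K).
    by rewrite prim_root_exp_coprime // coprime_sym.
  apply: (gasp_private (e := K)) => //; first exact: alpha_s_small.
  exact: rho_inj omK_prim N_le.
- by apply: (gasp_private (e := 1)) => //; exact: alpha_s_big.
Qed.
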